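(* For every integer $n\ge 1$, $R_n(x)=L_{2n,n}(x)$.
   Context: An even tree is a rooted plane (ordered) tree in which every vertex has an even number of children. If a vertex has $2k$ children, its first $k$ children (in the plane order) are called left children and its last $k$ children are called right children. The degree of a vertex means its number of children. The $r$-index $r(T)$ of an even tree $T$ is half of the sum of the degrees of all vertices of $T$ that are right children. Let $R_{n,k}$ be the number of even trees with $2n$ edges and $r$-index $k$, and $R_n(x)=\sum_{k=0}^{n-1}R_{n,k}x^k$. Lattice polynomials: for integers $i,j\ge 0$, consider lattice paths from $(0,0)$ to $(i,j)$ consisting of unit east steps $(1,0)$ and unit north steps $(0,1)$ such that no step goes above the line $x=2y$ (every lattice point $(a,b)$ visited satisfies $a\ge 2b$). A north step from $(k,\ell)$ to $(k,\ell+1)$ receives weight $x$ if $k$ is odd; all other steps receive weight $1$. The weight of a path is the product of its step weights, and $L_{i,j}(x)$ is the sum of the weights of all such paths. *)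

From HB Require Import structures.
From mathcomp Require Import all_boot all_order all_algebra.
Set Implicit Arguments. Unset Strict Implicit. Unset Printing Implicit Defensive.
Import GRing.Theory.

(* Rooted plane (ordered) trees: a vertex is the ordered list of its children. *)
Inductive tree := Node of seq tree.

Fixpoint encode (t : tree) : GenTree.tree unit :=
  let: Node ts := t in GenTree.Node 0 (map encode ts).
Fixpoint decode (g : GenTree.tree unit) : tree :=
  match g with
  | GenTree.Leaf _ => Node [::]
  | GenTree.Node _ gs => Node (map decode gs)
  end.
Lemma encodeK : cancel encode decode.
Proof.
rewrite /cancel; fix IH 1; case=> ts /=; congr Node; elim: ts => [|t ts IHts] //=.
by rewrite IH IHts.
Qed.
HB.instance Definition _ := Equality.copy tree (can_type encodeK).

Definition children (t : tree) : seq tree := let: Node ts := t in ts.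
Definition deg (t : tree) : nat := size (children t).

Fixpoint edges (t : tree) : nat :=
  let: Node ts := t in sumn (map (fun c => (edges c).+1) ts).

Fixpoint even_tree (t : tree) : bool :=
  let: Node ts := t in ~~ odd (size ts) && all even_tree ts.

(* sum of the degrees of all vertices of t that are right children, i.e.
   among the last (size ts)/2 children of their parent (the root is not a
   child of anything) *)
Fixpoint rdeg (t : tree) : nat :=
  let: Node ts := t in
  sumn (map rdeg ts) + sumn (map deg (drop (size ts)./2 ts)).

Definition rindex (t : tree) : nat := (rdeg t)./2.

(* Enumeration of plane forests with e edges (fuel f >= e) and of plane
   trees with m edges. *)
Fixpoint forests (f e : nat) : seq (seq tree) :=
  match f with
  | 0 => if e == 0 then [:: [::]] else [::]
  | f'.+1 =>
    if e == 0 then [:: [::]] else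
    flatten [seq [seq Node c :: rest | c <- forests f' a,
                                       rest <- forests f' (e - a.+1)]
            | a <- iota 0 e]
  end.
Definition trees_enum (m : nat) : seq tree := [seq Node c | c <- forests m m].

Definition Rcount (n k : nat) : nat :=
  count (fun t => even_tree t && (rindex t == k)) (trees_enum (2 * n)).

Local Open Scope ring_scope.

Definition Rpoly (n : nat) : {poly int} :=
  \sum_(k < n) (Rcount n k)%:R *: 'X^k.

(* Lattice paths from (0,0) to (i,j) with unit E/N steps, encoded as a
   (i+j)-tuple of booleans (true = north step). *)
Definition npre (m : nat) (p : m.-tuple bool) (s : nat) : nat := count id (take s p).
Definition epre (m : nat) (p : m.-tuple bool) (s : nat) : nat := count negb (take s p).

Definition ends_at (i j : nat) (p : (i + j).-tuple bool) : bool :=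
  npre p (i + j) == j.

Definition below_line (m : nat) (p : m.-tuple bool) : bool :=
  [forall s : 'I_m.+1, (2 * npre p s <= epre p s)%N].

Definition path_weight (m : nat) (p : m.-tuple bool) : {poly int} :=
  \prod_(s < m) (if tnth p s && odd (epre p s) then 'X else 1).

Definition Lpoly (i j : nat) : {poly int} :=
  \sum_(p : (i + j).-tuple bool | ends_at p && below_line p) path_weight p.

(* Both sides are coefficients of the solution of one algebraic system.  Let
   T(t) be the sum of x^(r-index) t^(edges) over even trees, and U(t) the same
   sum in which the root also pays the x^(deg/2) it would pay as a right child.
   Splitting the 2k children of the root into k left and k right subtrees gives
   T = sum_k (t^2 T U)^k and U = sum_k (x t^2 T U)^k, that is
     T = 1 + t^2 U T^2,   U = 1 + x t^2 T U^2.
   A lattice path is a walk with steps +1 (east) and -2 (north) on the level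
   x - 2y; cutting a walk from 0 to 0 at its first return to 0 and at the last
   visit to level 1 before it, the series L, L' of such walks (with the two
   parities of weighting) satisfy L = 1 + t^3 L' L^2, L' = 1 + x t^3 L L'^2.
   The system P = 1 + s Q P^2, Q = 1 + x s P Q^2 has a unique power-series
   solution, so T and L are the same series in s = t^2 and s = t^3, and
   R_n = [t^2n] T = [t^3n] L = L_{2n,n}. *)

From mathcomp Require Import all_boot all_order all_algebra.
From mathcomp Require Import zify ring.
Set Implicit Arguments. Unset Strict Implicit. Unset Printing Implicit Defensive.
Import GRing.Theory.
Local Open Scope ring_scope.

Section TruncatedSeries.
Variable R : nzRingType.
Implicit Types (p q : {poly R}) (g h : nat -> R).

Definition agree N p q := forall i, (i < N)%N -> p`_i = q`_i.

Lemma agree_sym N p q : agree N p q -> agree N q p.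
Proof. by move=> E i Hi; rewrite E. Qed.

Lemma agree_trans N p q r : agree N p q -> agree N q r -> agree N p r.
Proof. by move=> E1 E2 i Hi; rewrite E1 ?E2. Qed.

Lemma agreeW M N p q : (M <= N)%N -> agree N p q -> agree M p q.
Proof. by move=> HM E i Hi; apply: E; apply: leq_trans HM. Qed.

Lemma agreeD N p q p' q' : agree N p p' -> agree N q q' -> agree N (p + q) (p' + q').
Proof. by move=> E1 E2 i Hi; rewrite !coefD E1 ?E2. Qed.

Lemma agreeM N p q p' q' : agree N p p' -> agree N q q' -> agree N (p * q) (p' * q').
Proof.
move=> E1 E2 i Hi; rewrite !coefM; apply: eq_bigr => j _.
have Hj := ltn_ord j; rewrite E1 ?E2 //; lia.
Qed.

Lemma agree_sum I (r : seq I) (P : pred I) N (F G : I -> {poly R}) :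
  (forall k, agree N (F k) (G k)) ->
  agree N (\sum_(k <- r | P k) F k) (\sum_(k <- r | P k) G k).
Proof. by move=> E i Hi; rewrite !coef_sum; apply: eq_bigr => k _; apply: E. Qed.

Lemma agreeXnM N k p q : agree N p q -> agree (N + k) ('X^k * p) ('X^k * q).
Proof.
move=> E i Hi; rewrite !coefXnM; case: ltnP => // Hk; apply: E.
by rewrite ltn_subLR // addnC.
Qed.

Lemma agreeXM N p q : agree N p q -> agree N.+1 ('X * p) ('X * q).
Proof. by move=> /(@agreeXnM _ 1); rewrite expr1 addn1. Qed.

Lemma agreeXnM0 N k p : (N <= k)%N -> agree N ('X^k * p) 0.
Proof. by move=> Hk i Hi; rewrite coefXnM coef0 (leq_trans Hi Hk). Qed.

Lemma agree_comp_Xn k N p q : (0 < k)%N -> agree N p q ->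
  agree (k * N) (p \Po 'X^k) (q \Po 'X^k).
Proof.
move=> k0 E i Hi; rewrite !coef_comp_poly_Xn //; case: ifP => // _.
by apply: E; rewrite ltn_divLR // mulnC.
Qed.

Definition trunc g N : {poly R} := \poly_(i < N) g i.

Lemma trunc_ext g h N : (forall i, (i < N)%N -> g i = h i) -> trunc g N = trunc h N.
Proof. by move=> E; apply/polyP=> i; rewrite !coef_poly; case: ifP => // /E. Qed.

Lemma trunc0 N : trunc (fun=> 0) N = 0.
Proof. by apply/polyP=> i; rewrite coef_poly coef0; case: ifP. Qed.

Lemma truncCM c g N : trunc (fun m => c * g m) N = c%:P * trunc g N.
Proof. by apply/polyP=> i; rewrite coefCM !coef_poly; case: ifP; rewrite ?mulr0. Qed.

Lemma trunc_sum I (r : seq I) (F : I -> nat -> R) N :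
  trunc (fun m => \sum_(k <- r) F k m) N = \sum_(k <- r) trunc (F k) N.
Proof.
apply/polyP=> i; rewrite coef_poly coef_sum; case: ifP => Hi.
  by apply: eq_bigr => k _; rewrite coef_poly Hi.
by rewrite big1 // => k _; rewrite coef_poly Hi.
Qed.

Lemma trunc_succ g h N : g 0%N = 1 -> (forall m, g m.+1 = h m) ->
  agree N (trunc g N) (1 + 'X * trunc h N).
Proof.
move=> g0 gS i Hi; rewrite coefD coefXM coef1 !coef_poly Hi.
by case: i Hi => [|i] Hi /=; rewrite ?g0 ?addr0 // gS add0r (ltnW Hi).
Qed.

Lemma trunc_conv g h N :
  agree N (trunc (fun a => \sum_(b < a) g b * h (a - b.+1)%N) N)
          ('X * (trunc g N * trunc h N)).
Proof.
move=> i Hi; rewrite coefXM coef_poly Hi.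
case: i Hi => [|i] Hi /=; first by rewrite big_ord0.
rewrite coefM; apply: eq_bigr => j _; rewrite !coef_poly subSS.
have Hj := ltn_ord j.
have -> : (j < N)%N by lia.
by have -> : (i - j < N)%N by lia.
Qed.

End TruncatedSeries.

Lemma agree_geometric (R : comNzRingType) N (r S : {poly R}) :
  agree N S (\sum_(k < N) ('X * r) ^+ k) -> agree N S (1 + 'X * r * S).
Proof.
move=> ES; set G := \sum_(k < N) _ in ES *.
have expand : 1 + 'X * r * G = G + ('X * r) ^+ N.
  transitivity (\sum_(k < N.+1) ('X * r) ^+ k); last by rewrite big_ord_recr.
  rewrite big_ord_recl expr0 mulr_sumr; congr (_ + _).
  by apply: eq_bigr => k _; rewrite exprS.
have GS : agree N (1 + 'X * r * G) (1 + 'X * r * S).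
  by apply: agreeD => //; apply: agreeM => //; apply: agree_sym.
apply: agree_trans ES (agree_trans _ GS).
by rewrite expand -{1}[G]addr0 exprMn; apply: agreeD => //; apply/agree_sym/agreeXnM0.
Qed.

Section QuadraticSystem.
Variables (R : comNzRingType) (c : R).

Definition solves k N (P Q : {poly R}) :=
  agree N P (1 + 'X^k * (Q * P * P)) /\ agree N Q (1 + 'X^k * (c%:P * (P * Q * Q))).

Lemma solves_agree_step k N P Q P' Q' : (0 < k)%N ->
  solves k N.+1 P Q -> solves k N.+1 P' Q' ->
  agree N P P' -> agree N Q Q' -> agree N.+1 P P' /\ agree N.+1 Q Q'.
Proof.
move=> k0 [EP EQ] [EP' EQ'] E1 E2.
have HN : (N.+1 <= N + k)%N by rewrite -addn1 leq_add2l.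
have EPQ : agree N.+1 ('X^k * (Q * P * P)) ('X^k * (Q' * P' * P')).
  by apply: agreeW HN _; apply: agreeXnM; do 2 apply: agreeM => //.
have EQP : agree N.+1 ('X^k * (c%:P * (P * Q * Q))) ('X^k * (c%:P * (P' * Q' * Q'))).
  by apply: agreeW HN _; apply: agreeXnM; do 3 apply: agreeM => //.
by split; [apply: agree_trans EP (agree_trans _ (agree_sym EP'))
          |apply: agree_trans EQ (agree_trans _ (agree_sym EQ'))]; apply: agreeD.
Qed.

Lemma solves_uniq k N P Q P' Q' : (0 < k)%N ->
  solves k N P Q -> solves k N P' Q' -> agree N P P' /\ agree N Q Q'.
Proof.
move=> k0 S S'; suff: forall j, (j <= N)%N -> agree j P P' /\ agree j Q Q' by apply.
elim=> [|j IH] Hj; first by split.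
have solvesW (A B : {poly R}) : solves k N A B -> solves k j.+1 A B.
  by case=> EA EB; split; apply: agreeW Hj _.
have [E1 E2] := IH (ltnW Hj).
exact: solves_agree_step k0 (solvesW _ _ S) (solvesW _ _ S') E1 E2.
Qed.

Fixpoint picard (i : nat) : {poly R} * {poly R} :=
  if i is i'.+1 then
    let: (P, Q) := picard i' in
    (1 + 'X * (Q * P * P), 1 + 'X * (c%:P * (P * Q * Q)))
  else (1, 1).

Lemma picard_solves i : solves 1 i (picard i).1 (picard i).2.
Proof.
rewrite /solves expr1; elim: i => [|i [IH1 IH2]] /=; first by split.
case: (picard i) IH1 IH2 => P Q /= IH1 IH2.
by split; apply: agreeD => //; apply: agreeXM; do 3 apply: agreeM => //.
Qed.

Lemma solves_comp_Xn k N P Q : (0 < k)%N ->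
  solves 1 N P Q -> solves k (k * N) (P \Po 'X^k) (Q \Po 'X^k).
Proof.
move=> k0 [/(agree_comp_Xn k0) EP /(agree_comp_Xn k0) EQ]; split.
  by move: EP; rewrite comp_polyD !comp_polyM comp_polyX -polyC1 comp_polyC.
by move: EQ; rewrite comp_polyD !comp_polyM comp_polyX -polyC1 !comp_polyC.
Qed.

Lemma solves_coef k (g h : nat -> R) n : (0 < k)%N ->
  (forall N, solves k N (trunc g N) (trunc h N)) -> g (k * n)%N = (picard n.+1).1`_n.
Proof.
move=> k0 S.
have [E _] := solves_uniq k0 (S (k * n.+1)%N) (solves_comp_Xn k0 (picard_solves n.+1)).
have kn : (k * n < k * n.+1)%N by rewrite ltn_pmul2l.
by move: (E _ kn); rewrite coef_poly kn coef_comp_poly_Xn // dvdn_mulr // mulKn.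
Qed.

End QuadraticSystem.

(* [walks f b t m h]: weighted sum over the words of [m] steps [+1] (east) and
   [-2] (north) read from level [h], never going below [b] and ending at
   level [t]; a [-2] step from level [l] weighs [x] iff [odd l (+) f].  For a
   lattice path the level is [#east - 2 * #north], whose parity is that of
   [#east]. *)
Definition step_wt (f : bool) (l : nat) : {poly int} := if odd l (+) f then 'X else 1.

Fixpoint walks (f : bool) (b t m h : nat) : {poly int} :=
  if m is m'.+1 then
    walks f b t m' h.+1 + (if (b.+2 <= h)%N then step_wt f h * walks f b t m' (h - 2) else 0)
  else (h == t)%:R.

Lemma walks_shift f b t m h : walks f b.+1 t.+1 m h.+1 = walks (~~ f) b t m h.
Proof.
elim: m h => [|m IH] h /=; first by rewrite eqSS.
rewrite IH ltnS; case: ifP => // Hb.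
have -> : (h.+1 - 2 = (h - 2).+1)%N by lia.
by rewrite IH /step_wt /= addNb addbN.
Qed.

(* Cut at the first visit to level 0, necessarily by a [-2] step from 2. *)
Lemma walks_first_zero f m h : (0 < h)%N ->
  walks f 0 0 m h = \sum_(a < m) walks f 1 2 a h * (step_wt f 2 * walks f 0 0 (m - a.+1) 0).
Proof.
elim: m h => [|m IH] h h0; first by rewrite big_ord0 /=; case: h h0.
rewrite big_ord_recl /= subn1 /=.
under eq_bigr => i _ do rewrite /bump /= add0n add1n subSS mulrDl.
rewrite big_split /= -IH //.
case: h h0 => [|[|[|h]]] // _ /=.
- by rewrite big1 ?mul0r ?add0r ?addr0 // => i _; rewrite mul0r.
- by rewrite big1 ?mul0r ?add0r ?addr0 ?mul1r 1?addrC // => i _; rewrite mul0r.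
- rewrite mul0r add0r; congr (_ + _).
  by rewrite IH // mulr_sumr; apply: eq_bigr => i _; rewrite mulrA.
Qed.

(* Cut at the last visit to level 1, necessarily followed by a [+1] step. *)
Lemma walks_last_one f a h : (0 < h)%N -> walks f 1 2 a h =
  (if (2 <= h)%N then walks f 2 2 a h else 0)
  + \sum_(b < a) walks f 1 1 b h * walks f 2 2 (a - b.+1) 2.
Proof.
elim: a h => [|a IH] h h0.
  by rewrite big_ord0 addr0 /=; case: h h0 => [|[|[|h]]].
rewrite big_ord_recl /= subn1 /=.
under eq_bigr => i _ do rewrite /bump /= add0n add1n subSS mulrDl.
rewrite big_split /= IH //.
have sum0 : \sum_(i < a) 0 * walks f 2 2 (a - i.+1) 2 = 0.
  by apply: big1 => i _; rewrite mul0r.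
case: h h0 => [|[|[|h]]] // _ /=; rewrite ?sum0; try ring.
have -> : (h.+3 - 2 = h.+1)%N by lia.
rewrite mul0r add0r IH //.
have -> : \sum_(i < a) step_wt f h.+3 * walks f 1 1 i h.+1 * walks f 2 2 (a - i.+1) 2 =
          step_wt f h.+3 * \sum_(i < a) walks f 1 1 i h.+1 * walks f 2 2 (a - i.+1) 2.
  by rewrite mulr_sumr; apply: eq_bigr => i _; rewrite mulrA.
by case: h => [|h] /=; ring.
Qed.

Definition Lwalks f m := walks f 0 0 m 0.

Lemma Lwalks_series f N :
  agree N (trunc (Lwalks f) N)
    (1 + 'X^3 * ((step_wt f 2)%:P *
                 (trunc (Lwalks (~~ f)) N * trunc (Lwalks f) N * trunc (Lwalks f) N))).
Proof.
set L := trunc (Lwalks f) N; set L' := trunc (Lwalks (~~ f)) N.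
have first_step : agree N L (1 + 'X * trunc (fun m => walks f 0 0 m 1) N).
  by apply: trunc_succ => // m; rewrite /Lwalks /= addr0.
have last_one : trunc (fun a => walks f 1 2 a 1) N =
                trunc (fun a => \sum_(b < a) Lwalks (~~ f) b * Lwalks f (a - b.+1)%N) N.
  apply: trunc_ext => a _; rewrite walks_last_one // add0r; apply: eq_bigr => b _.
  by rewrite /Lwalks !walks_shift negbK.
have first_zero : agree N (trunc (fun m => walks f 0 0 m 1) N)
    ('X * ('X * (L' * L) * ((step_wt f 2)%:P * L))).
  have := trunc_conv (N := N) (fun a => walks f 1 2 a 1) (fun c => step_wt f 2 * Lwalks f c).
  rewrite truncCM last_one (@trunc_ext _ _ (fun m => walks f 0 0 m 1)) => [E|m _].
    by apply: agree_trans E _; do 2 apply: agreeM => //; apply: trunc_conv.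
  by rewrite walks_first_zero.
apply: agree_trans first_step _.
have -> : 1 + 'X^3 * ((step_wt f 2)%:P * (L' * L * L)) =
          1 + 'X * ('X * ('X * (L' * L) * ((step_wt f 2)%:P * L))) by ring.
by apply: agreeD => //; apply: agreeM.
Qed.

Lemma Lwalks_solves N : solves 'X 3 N (trunc (Lwalks false) N) (trunc (Lwalks true) N).
Proof.
by split; [move: (Lwalks_series (N := N) false); rewrite /step_wt /= mul1r
          |move: (Lwalks_series (N := N) true)].
Qed.

Lemma sum_tuple0 (R : nmodType) (F : seq bool -> R) : \sum_(p : 0.-tuple bool) F p = F [::].
Proof. by rewrite (big_pred1 [tuple]) // => p; rewrite [p]tuple0; apply/esym/eqP. Qed.

Lemma sum_tupleS (R : nmodType) (F : seq bool -> R) m :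
  \sum_(p : m.+1.-tuple bool) F p = \sum_(p : m.-tuple bool) (F (true :: p) + F (false :: p)).
Proof.
rewrite (reindex (fun q : bool * m.-tuple bool => [tuple of q.1 :: q.2])) /=; last first.
  exists (fun p : m.+1.-tuple bool => (thead p, [tuple of behead p])) => [[b t] _|p _].
    by congr pair; apply: val_inj.
  by apply: val_inj; case: p => [[|b s] //= Hs].
by rewrite -(pair_bigA _ (fun b (p : m.-tuple bool) => F (b :: p))) /= big_bool /= -big_split.
Qed.

Fixpoint word_wt (h : nat) (s : seq bool) : {poly int} :=
  if s is b :: s' then
    if b then (if (2 <= h)%N then step_wt false h * word_wt (h - 2) s' else 0)
    else word_wt h.+1 s'
  else (h == 0)%:R.

Lemma sum_word_wt m h : \sum_(p : m.-tuple bool) word_wt h p = walks false 0 0 m h.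
Proof.
elim: m h => [|m IH] h; first by rewrite sum_tuple0.
rewrite sum_tupleS /= big_split /= IH addrC; congr (_ + _).
by case: ifP => _; [rewrite -mulr_sumr IH | rewrite big1].
Qed.

Definition lattice_ok (e0 n0 : nat) (s : seq bool) : bool :=
  all (fun i => 2 * (n0 + count id (take i s)) <= e0 + count negb (take i s))%N
      (iota 0 (size s).+1)
  && (e0 + count negb s == 2 * (n0 + count id s))%N.

Definition lattice_wt (e0 : nat) (s : seq bool) : {poly int} :=
  \prod_(0 <= i < size s) (if nth false s i && odd (e0 + count negb (take i s)) then 'X else 1).

Lemma all_iota0S (Q : pred nat) n :
  all Q (iota 0 n.+1) = Q 0%N && all (fun i => Q i.+1) (iota 0 n).
Proof. by rewrite /= -(addn0 1%N) iotaDl all_map. Qed.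

Lemma lattice_ok_cons e0 n0 b s : (2 * n0 <= e0)%N ->
  lattice_ok e0 n0 (b :: s) = lattice_ok (e0 + ~~ b) (n0 + b) s.
Proof.
move=> H; rewrite /lattice_ok [size _]/= all_iota0S take0 /= !addn0 H /= !addnA.
by do 2 congr (_ && _); apply: eq_all => i; rewrite /= !addnA.
Qed.

Lemma lattice_wt_cons e0 b s :
  lattice_wt e0 (b :: s) = (if b && odd e0 then 'X else 1) * lattice_wt (e0 + ~~ b) s.
Proof.
rewrite /lattice_wt /= big_nat_recl //= addn0; congr (_ * _).
by apply: eq_bigr => i _ /=; rewrite addnA.
Qed.

(* From the point [(e0, n0)] the walk level is [e0 - 2 n0]. *)
Lemma word_wtE s e0 n0 : (2 * n0 <= e0)%N ->
  word_wt (e0 - 2 * n0) s = (lattice_ok e0 n0 s)%:R * lattice_wt e0 s.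
Proof.
elim: s e0 n0 => [|b s IH] e0 n0 H.
  rewrite /lattice_ok /lattice_wt /= big_nil mulr1 !addn0 H /=.
  by have -> : (e0 - 2 * n0 == 0)%N = (e0 == 2 * n0)%N by apply/eqP/eqP; lia.
rewrite lattice_ok_cons // lattice_wt_cons; case: b => /=; last first.
  by rewrite addn0 addn1 mul1r -IH; [congr word_wt; lia | lia].
rewrite !addn0; case: (leqP (2 * n0.+1) e0) => H2.
  have -> : (2 <= e0 - 2 * n0)%N by lia.
  have -> : (e0 - 2 * n0 - 2 = e0 - 2 * (n0 + 1))%N by lia.
  rewrite IH ?addn1 // /step_wt addbF mulrCA.
  by have -> : odd (e0 - 2 * n0) = odd e0 by rewrite oddB ?odd_mul ?addbF //; lia.
have -> : (2 <= e0 - 2 * n0)%N = false by lia.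
rewrite /lattice_ok /= take0 /= !addn0.
have -> : (2 * (n0 + 1) <= e0)%N = false by lia.
by rewrite mul0r.
Qed.

Lemma forall_ord_iota m (Q : pred nat) : [forall s : 'I_m, Q s] = all Q (iota 0 m).
Proof.
apply/forallP/allP => [H i|H i]; last by apply: H; rewrite mem_iota ltn_ord.
by rewrite mem_iota add0n => Hi; apply: (H (Ordinal Hi)).
Qed.

Lemma Lpoly_Lwalks n : Lpoly (2 * n) n = Lwalks false (3 * n).
Proof.
rewrite /Lpoly /Lwalks [(3 * n)%N](_ : _ = 2 * n + n)%N ?mulSnr //.
rewrite -sum_word_wt big_mkcond /=; apply: eq_bigr => p _.
have := @word_wtE p 0 0 (leqnn 0); rewrite muln0 subnn => ->.
have Hs := size_tuple p.
have -> : ends_at p && below_line p = lattice_ok 0 0 p.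
  rewrite /ends_at /below_line (forall_ord_iota _ (fun i => 2 * npre p i <= epre p i)%N).
  rewrite /lattice_ok /npre /epre Hs take_oversize ?Hs // andbC; congr (_ && _).
  have := count_predC id p; rewrite Hs.
  have -> : count (predC id) p = count negb p by apply: eq_count.
  by move=> Hc; apply/eqP/eqP; lia.
have -> : path_weight p = lattice_wt 0 p.
  rewrite /path_weight /lattice_wt Hs big_mkord; apply: eq_bigr => i _.
  by rewrite (tnth_nth false).
by case: (lattice_ok 0 0 p); rewrite ?mul1r ?mul0r.
Qed.

Lemma tree_ind_in (P : tree -> Prop) :
  (forall ts, (forall t, t \in ts -> P t) -> P (Node ts)) -> forall t, P t.
Proof.
move=> H; fix IH 1; case=> ts; apply: H; move: ts; fix IHts 1.
case=> [|u us] t; first by rewrite in_nil => /negP; case.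
by rewrite in_cons => /orP [/eqP -> | /(IHts us)]; [apply: IH |].
Qed.

Section SumnMap.
Variables (T : Type) (f g : T -> nat).

Lemma sumn_mapD l : sumn (map (fun t => f t + g t)%N l) = (sumn (map f l) + sumn (map g l))%N.
Proof. by elim: l => //= a l ->; lia. Qed.

Lemma sumn_map_take_drop k l :
  sumn (map f l) = (sumn (map f (take k l)) + sumn (map f (drop k l)))%N.
Proof. by rewrite -{1}(cat_take_drop k l) map_cat sumn_cat. Qed.

Lemma sumn_map_even l : all (fun t => ~~ odd (f t)) l -> ~~ odd (sumn (map f l)).
Proof. by elim: l => //= a l IH /andP [fa /IH]; rewrite oddD (negbTE fa) => ->. Qed.

Lemma half_sumn_map l : all (fun t => ~~ odd (f t)) l ->
  (sumn (map f l))./2 = sumn (map (fun t => (f t)./2) l).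
Proof. by elim: l => //= a l IH /andP [fa /IH]; rewrite halfD (negbTE fa) => ->. Qed.

End SumnMap.

Lemma even_deg t : even_tree t -> ~~ odd (deg t).
Proof. by case: t => ts /= /andP []. Qed.

Lemma even_rdeg t : even_tree t -> ~~ odd (rdeg t).
Proof.
elim/tree_ind_in: t => ts IH /= /andP [_ /allP ev_ts].
rewrite oddD (negbTE (sumn_map_even _)); last by apply/allP => t tts; apply: IH tts (ev_ts t tts).
rewrite sumn_map_even //; apply/allP => t /mem_drop tts; exact/even_deg/ev_ts.
Qed.

Lemma rdeg_deg_le_edges t : (rdeg t + deg t <= edges t)%N.
Proof.
elim/tree_ind_in: t => ts IH; rewrite /deg /=.
have drop_le : (sumn (map deg (drop (size ts)./2 ts)) <= sumn (map deg ts))%N.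
  by rewrite (sumn_map_take_drop _ (size ts)./2 ts) leq_addl.
apply: leq_trans (_ : sumn (map rdeg ts) + sumn (map deg ts) + size ts <= _)%N.
  by rewrite leq_add2r leq_add2l.
elim: ts IH {drop_le} => //= c ts IHts IH.
have := IH c (mem_head _ _).
by have := IHts (fun t tts => IH t (@mem_behead _ (c :: ts) _ tts)); lia.
Qed.

(* [right_wt t] is the weight of [t] as a right child: its own degree then
   also counts in the r-index. *)
Definition tree_wt (t : tree) : {poly int} := if even_tree t then 'X^(rindex t) else 0.
Definition right_wt (t : tree) : {poly int} :=
  if even_tree t then 'X^(rindex t + (deg t)./2) else 0.

Lemma right_wtE t : right_wt t = 'X^((deg t)./2) * tree_wt t.
Proof. by rewrite /right_wt /tree_wt; case: ifP; rewrite ?mulr0 // -exprD addnC. Qed.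

(* The weight of a forest of [k] left children followed by [j] right children. *)
Fixpoint forest_wt (k j : nat) (ts : seq tree) : {poly int} :=
  match ts, k, j with
  | [::], 0, 0 => 1
  | t :: r, k'.+1, _ => tree_wt t * forest_wt k' j r
  | t :: r, 0, j'.+1 => right_wt t * forest_wt 0 j' r
  | _, _, _ => 0
  end.

Lemma forest_wtE k j ts : forest_wt k j ts =
  (size ts == k + j)%N%:R *
  ((\prod_(t <- take k ts) tree_wt t) * \prod_(t <- drop k ts) right_wt t).
Proof.
elim: ts k j => [|t r IH] k j.
  by case: k j => [|k] [|j]; rewrite /= ?big_nil ?mulr1 ?mul0r.
case: k => [|k] /=; last by rewrite IH !big_cons addSn eqSS !mulrA [_ * tree_wt t]mulrC.
case: j => [|j]; first by rewrite mul0r.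
by rewrite IH take0 drop0 !big_nil !mul1r big_cons eqSS mulrCA.
Qed.

Lemma forest_wt_size k j ts : size ts != (k + j)%N -> forest_wt k j ts = 0.
Proof. by rewrite forest_wtE => /negbTE ->; rewrite mul0r. Qed.

Lemma prod_expr_if (R : nzRingType) (x : R) I (l : seq I) (P : pred I) (f : I -> nat) :
  \prod_(i <- l) (if P i then x ^+ f i else 0) = if all P l then x ^+ sumn (map f l) else 0.
Proof.
elim: l => [|i l IH]; first by rewrite big_nil.
rewrite big_cons IH /=; case: (P i); last by rewrite mul0r.
by case: (all P l); rewrite ?mulr0 // exprD.
Qed.

Lemma rindex_Node ts : all even_tree ts ->
  rindex (Node ts) = (sumn (map rindex (take (size ts)./2 ts))
                      + sumn (map (fun t => rindex t + (deg t)./2)%N (drop (size ts)./2 ts)))%N.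
Proof.
move=> /allP ev_ts; rewrite /rindex /= halfD.
rewrite (negbTE (sumn_map_even _)); last by apply/allP => t /ev_ts /even_rdeg.
rewrite half_sumn_map; last by apply/allP => t /ev_ts /even_rdeg.
rewrite half_sumn_map; last by apply/allP => t /mem_drop /ev_ts /even_deg.
by rewrite sumn_mapD (sumn_map_take_drop _ (size ts)./2 ts) /= add0n addnA.
Qed.

Lemma tree_wt_Node ts : tree_wt (Node ts) =
  if odd (size ts) then 0 else forest_wt (size ts)./2 (size ts)./2 ts.
Proof.
rewrite {1}/tree_wt /=; case odd_ts: (odd (size ts)) => //=.
have size_ts : size ts = ((size ts)./2 + (size ts)./2)%N.
  by rewrite addnn even_halfK ?odd_ts.
rewrite forest_wtE -size_ts eqxx mul1r /tree_wt /right_wt.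
rewrite (prod_expr_if _ _ even_tree).
rewrite (prod_expr_if _ _ even_tree (fun t => rindex t + (deg t)./2)%N).
rewrite -{1}(cat_take_drop (size ts)./2 ts) all_cat.
case ev_l: (all even_tree _); last by rewrite mul0r.
case ev_r: (all even_tree _); last by rewrite mulr0.
rewrite -exprD rindex_Node //.
by rewrite -(cat_take_drop (size ts)./2 ts) all_cat ev_l ev_r.
Qed.

Lemma forests_unfold f e : forests f.+1 e.+1 =
  flatten [seq [seq Node c :: r | c <- forests f a, r <- forests f (e.+1 - a.+1)]
          | a <- iota 0 e.+1].
Proof. by []. Qed.

Lemma forests_fuel f g e : (e <= f)%N -> (e <= g)%N -> forests f e = forests g e.
Proof.
elim: f g e => [|f IH] [|g] [|e] le_f le_g //.
rewrite !forests_unfold; congr flatten; apply/eq_in_map => a.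
rewrite mem_iota add0n => /andP [_ lt_a].
by rewrite (IH g a) ?(IH g (e.+1 - a.+1)%N) //; lia.
Qed.

Lemma forestsS e : forests e.+1 e.+1 =
  flatten [seq [seq Node c :: r | c <- forests a a, r <- forests (e - a) (e - a)]
          | a <- iota 0 e.+1].
Proof.
rewrite forests_unfold; congr flatten; apply/eq_in_map => a.
rewrite mem_iota add0n => /andP [_ lt_a].
by rewrite subSS (@forests_fuel e a a) ?(@forests_fuel e (e - a) (e - a)) //; lia.
Qed.

Lemma forests_edges f e ts : ts \in forests f e -> edges (Node ts) = e.
Proof.
elim: f e ts => [|f IH] e ts /=.
  by case: eqP => [-> | _]; rewrite ?inE // => /eqP ->.
case: eqP => [-> | _]; first by rewrite inE => /eqP ->.
move=> /flattenP [l /mapP [a a_e ->]] /allpairsPdep [c [r [/IH ec /IH er ->]]] /=.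
by move: ec er a_e; rewrite /= mem_iota add0n => -> ->; lia.
Qed.

Lemma size_le_edges ts : (size ts <= edges (Node ts))%N.
Proof. by elim: ts => //= t ts IH; rewrite ltnS (leq_trans IH) // leq_addl. Qed.

Definition sum_tree_wt (e : nat) : {poly int} := \sum_(c <- forests e e) tree_wt (Node c).
Definition sum_right_wt (e : nat) : {poly int} := \sum_(c <- forests e e) right_wt (Node c).
Definition sum_forest_wt (k j e : nat) : {poly int} := \sum_(ts <- forests e e) forest_wt k j ts.

Lemma sum_forest_wt0 k j : sum_forest_wt k j 0 = ((k == 0%N) && (j == 0%N))%:R.
Proof. by rewrite /sum_forest_wt /= big_seq1; case: k j => [|k] [|j]. Qed.

Lemma sum_forest_wtS k j e : sum_forest_wt k j e.+1 =
  \sum_(a < e.+1) \sum_(c <- forests a a) \sum_(r <- forests (e - a) (e - a))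
     forest_wt k j (Node c :: r).
Proof.
rewrite /sum_forest_wt forestsS big_flatten big_map -{1}(subn0 e.+1) -/(index_iota 0 _).
by rewrite big_mkord; apply: eq_bigr => a _; rewrite big_allpairs_dep.
Qed.

Lemma sum_forest_wt_left k j e :
  sum_forest_wt k.+1 j e.+1 = \sum_(a < e.+1) sum_tree_wt a * sum_forest_wt k j (e - a).
Proof.
rewrite sum_forest_wtS; apply: eq_bigr => a _; rewrite /sum_tree_wt mulr_suml.
by apply: eq_bigr => c _; rewrite /sum_forest_wt mulr_sumr.
Qed.

Lemma sum_forest_wt_right j e :
  sum_forest_wt 0 j.+1 e.+1 = \sum_(a < e.+1) sum_right_wt a * sum_forest_wt 0 j (e - a).
Proof.
rewrite sum_forest_wtS; apply: eq_bigr => a _; rewrite /sum_right_wt mulr_suml.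
by apply: eq_bigr => c _; rewrite /sum_forest_wt mulr_sumr.
Qed.

Lemma sum_forest_wt00 e : sum_forest_wt 0 0 e.+1 = 0.
Proof. by rewrite sum_forest_wtS big1 // => a _; rewrite big1 // => c _; rewrite big1. Qed.

Section TreeSeries.
Variable N : nat.
Local Notation T := (trunc sum_tree_wt N).
Local Notation U := (trunc sum_right_wt N).

Lemma trunc_sum_forest_wt k j :
  agree N (trunc (sum_forest_wt k j) N) (('X * T) ^+ k * ('X * U) ^+ j).
Proof.
elim: k => [|k IHk].
  rewrite expr0 mul1r; elim: j => [|j IHj].
    have := @trunc_succ _ (sum_forest_wt 0 0) (fun=> 0) N.
    by rewrite trunc0 mulr0 addr0 expr0; apply; [rewrite sum_forest_wt0 | apply: sum_forest_wt00].
  rewrite (@trunc_ext _ _ (fun a => \sum_(b < a) sum_right_wt b * sum_forest_wt 0 j (a - b.+1)%N)).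
    apply: agree_trans (trunc_conv (N := N) sum_right_wt (sum_forest_wt 0 j)) _.
    by rewrite exprS -mulrA; do 2 apply: agreeM => //.
  by case=> [|a] _; rewrite ?sum_forest_wt0 ?big_ord0 // sum_forest_wt_right;
    apply: eq_bigr => b _; rewrite subSS.
rewrite (@trunc_ext _ _ (fun a => \sum_(b < a) sum_tree_wt b * sum_forest_wt k j (a - b.+1)%N)).
  apply: agree_trans (trunc_conv (N := N) sum_tree_wt (sum_forest_wt k j)) _.
  by rewrite exprS -!mulrA; do 2 apply: agreeM => //.
by case=> [|a] _; rewrite ?sum_forest_wt0 ?big_ord0 // sum_forest_wt_left;
  apply: eq_bigr => b _; rewrite subSS.
Qed.

Lemma sum_diag_forest_wt (G : nat -> {poly int}) m : (m < N)%N ->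
  \sum_(k < N) G k * sum_forest_wt k k m =
  \sum_(c <- forests m m) G (size c)./2 * tree_wt (Node c).
Proof.
move=> lt_mN; under eq_bigr do rewrite /sum_forest_wt mulr_sumr.
rewrite exchange_big /=; apply: eq_big_seq => c /forests_edges edges_c.
have lt_cN : ((size c)./2 < N)%N.
  apply: leq_ltn_trans (half_leq (size_le_edges c)) _; rewrite edges_c.
  by apply: leq_ltn_trans lt_mN; rewrite leq_half_double -addnn; lia.
rewrite (bigD1 (Ordinal lt_cN)) //= big1 => [|k /eqP neq_k]; last first.
  rewrite forest_wt_size ?mulr0 //; apply/eqP => size_c; apply: neq_k.
  by apply: val_inj; rewrite /= size_c addnn doubleK.
rewrite addr0 tree_wt_Node; case: ifP => [odd_c | _]; last by [].
by rewrite forest_wt_size ?mulr0 // addnn; apply: contraTneq odd_c => ->; rewrite odd_double.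
Qed.

(* An even tree with [2k] children contributes [(t T)^k (t U)^k], times [x^k]
   when it is itself a right child. *)
Lemma trunc_sum_weighted_trees (a : {poly int}) :
  agree N (trunc (fun m => \sum_(c <- forests m m) a ^+ (size c)./2 * tree_wt (Node c)) N)
          (\sum_(k < N) ('X * (a%:P * 'X * T * U)) ^+ k).
Proof.
rewrite (@trunc_ext _ _ (fun m => \sum_(k < N) a ^+ k * sum_forest_wt k k m)); last first.
  by move=> m lt_mN; rewrite sum_diag_forest_wt.
rewrite trunc_sum; apply: agree_sum => k; rewrite truncCM => i lt_iN.
have -> : ('X * (a%:P * 'X * T * U)) ^+ k = (a ^+ k)%:P * (('X * T) ^+ k * ('X * U) ^+ k).
  by rewrite rmorphXn -!exprMn; congr (_ ^+ _); ring.
by rewrite !coefCM (trunc_sum_forest_wt _ _ lt_iN).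
Qed.

Lemma tree_solves : solves 'X 2 N T U.
Proof.
have geoT := trunc_sum_weighted_trees 1; have geoU := trunc_sum_weighted_trees 'X.
rewrite (@trunc_ext _ _ sum_tree_wt) in geoT; last first.
  by move=> m _; apply: eq_bigr => c _; rewrite expr1n mul1r.
rewrite (@trunc_ext _ _ sum_right_wt) in geoU; last first.
  by move=> m _; apply: eq_bigr => c _; rewrite right_wtE.
split.
- have -> : 1 + 'X^2 * (U * T * T) = 1 + 'X * (1%:P * 'X * T * U) * T by ring.
  exact: agree_geometric.
- have -> : 1 + 'X^2 * ('X%:P * (T * U * U)) = 1 + 'X * ('X%:P * 'X * T * U) * U by ring.
  exact: agree_geometric.
Qed.

End TreeSeries.

Lemma rindex_lt t n : even_tree t -> edges t = (2 * n)%N -> (0 < n)%N -> (rindex t < n)%N.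
Proof.
move=> ev_t edges_t n0; have le_t := rdeg_deg_le_edges t.
have even_r := even_rdeg ev_t; have even_d := even_deg ev_t.
have deg2 : (2 <= deg t)%N.
  by case: t ev_t edges_t even_d {le_t even_r} => [[|c [|c' ts]]] //= _; lia.
have := odd_double_half (rdeg t); rewrite (negbTE even_r) add0n -addnn /rindex; lia.
Qed.

Lemma Rpoly_sum_tree_wt n : (0 < n)%N -> Rpoly n = sum_tree_wt (2 * n).
Proof.
move=> n0; rewrite /Rpoly /Rcount /sum_tree_wt /trees_enum.
under eq_bigr do rewrite scaler_nat -sum1_count -sumrMnr big_mkcond big_map.
rewrite exchange_big; apply: eq_big_seq => c /forests_edges edges_c /=.
rewrite /tree_wt -[~~ odd _ && _]/(even_tree (Node c)).
case ev_c: (even_tree (Node c)); last by rewrite big1.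
rewrite (bigD1 (Ordinal (rindex_lt ev_c edges_c n0))) //= eqxx mulr1n big1 ?addr0 // => k neq_k.
by case: eqP => // eq_k; case/eqP: neq_k; apply: val_inj.
Qed.

Theorem mainTheorem2 (n : nat) : (1 <= n)%N -> Rpoly n = Lpoly (2 * n) n.
Proof.
move=> n0; rewrite Rpoly_sum_tree_wt // Lpoly_Lwalks.
rewrite (solves_coef (k := 2) (h := sum_right_wt) _ _ tree_solves) //.
by rewrite (solves_coef (k := 3) (h := Lwalks true) _ _ Lwalks_solves).
Qed.
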